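(* Let $|\psi\rangle\in\mathcal{H}'$ be a pure state and $\{(w_\mu,|\varphi_\mu\rangle)\}$ an ensemble of pure states of $\mathcal{H}'$ with probabilities $w_\mu\ge0$, $\sum_\mu w_\mu=1$, such that $$\sum_\mu w_\mu\,\mathcal{C}(|\varphi_\mu\rangle)\le\mathcal{C}(|\psi\rangle).$$ Then the transformation $|\psi\rangle\to\{(w_\mu,|\varphi_\mu\rangle)\}$ can be achieved by Z$_2$-invariant operations, i.e. there is a Z$_2$-invariant measurement $\{\mathcal{E}_\mu\}$ with $\mathcal{E}_\mu(|\psi\rangle\langle\psi|)=w_\mu|\varphi_\mu\rangle\langle\varphi_\mu|$ for every $\mu$.
   Context: $\mathcal{H}'$ is a two-dimensional Hilbert space with orthonormal basis $|0\rangle,|1\rangle$; $\pi=|0\rangle\langle0|-|1\rangle\langle1|$. A Z$_2$-invariant operation is a completely positive, trace-nonincreasing linear map $\mathcal{E}$ on operators on $\mathcal{H}'$ with $\mathcal{E}(\pi X\pi)=\pi\mathcal{E}(X)\pi$ for all $X$. A Z$_2$-invariant measurement is a (countable) family $\{\mathcal{E}_\mu\}$ of Z$_2$-invariant operations whose sum is trace-preserving. For a pure state $|\chi\rangle$, $\mathcal{C}(|\chi\rangle)=2\min\{|\langle0|\chi\rangle|^2,|\langle1|\chi\rangle|^2\}$. *)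

From HB Require Import structures.
From mathcomp Require Import all_boot all_algebra.
From mathcomp Require Import complex.
From mathcomp Require Import all_classical all_reals all_analysis.
Set Implicit Arguments. Unset Strict Implicit. Unset Printing Implicit Defensive.
Import GRing.Theory Num.Theory.
Import numFieldNormedType.Exports.
Local Open Scope classical_set_scope.
Local Open Scope ring_scope.

Definition sqnorm (R : realType) (z : R[i]) : R := complex.Re z ^+ 2 + complex.Im z ^+ 2.

Definition adjmx (R : realType) m n (A : 'M[R[i]]_(m, n)) : 'M[R[i]]_(n, m) :=
  (map_mx (@conjc R) A)^T.

(* a (normalized) pure state |chi> of H' = C^2, basis |0>,|1> *)
Definition pure_state (R : realType) (chi : 'cV[R[i]]_2) : Prop :=
  \sum_(i < 2) sqnorm (chi i 0) = 1.

Definition ketbra (R : realType) (chi : 'cV[R[i]]_2) : 'M[R[i]]_2 :=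
  chi *m adjmx chi.

Definition coh (R : realType) (chi : 'cV[R[i]]_2) : R :=
  2 * Num.min (sqnorm (chi 0 0)) (sqnorm (chi 1 0)).

(* positive semidefinite operator on C^I (I finite): <v|A|v> >= 0 for all v
   (order of the num field R[i]: nonnegative real) *)
Definition psd_fun (R : realType) (I : finType) (A : I -> I -> R[i]) : Prop :=
  forall v : I -> R[i],
    0 <= \sum_(i : I) \sum_(j : I) conjc (v i) * A i j * v j.

Definition psd (R : realType) n (A : 'M[R[i]]_n) : Prop := psd_fun (fun i j => A i j).

Definition is_linear_map (R : realType) (E : 'M[R[i]]_2 -> 'M[R[i]]_2) : Prop :=
  forall (a : R[i]) (X Y : 'M[R[i]]_2), E (a *: X + Y) = a *: E X + E Y.

(* complete positivity: id_I (x) E is positive for every finite ancilla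
   index set I; an operator on C^I (x) H' is given by its blocks X p q *)
Definition completely_positive (R : realType) (E : 'M[R[i]]_2 -> 'M[R[i]]_2) : Prop :=
  forall (I : finType) (X : I -> I -> 'M[R[i]]_2),
    psd_fun (fun p q : I * 'I_2 => X p.1 q.1 p.2 q.2) ->
    psd_fun (fun p q : I * 'I_2 => E (X p.1 q.1) p.2 q.2).

Definition trace_nonincreasing (R : realType) (E : 'M[R[i]]_2 -> 'M[R[i]]_2) : Prop :=
  forall X : 'M[R[i]]_2, psd X -> \tr (E X) <= \tr X.

Definition piZ2 (R : realType) : 'M[R[i]]_2 :=
  \matrix_(i < 2, j < 2) (if i == j then (if i == 0 then 1 else -1) else 0).

Definition Z2_invariant_operation (R : realType) (E : 'M[R[i]]_2 -> 'M[R[i]]_2) : Prop :=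
  [/\ is_linear_map E, completely_positive E, trace_nonincreasing E &
      forall X : 'M[R[i]]_2, E (piZ2 R *m X *m piZ2 R) = piZ2 R *m E X *m piZ2 R].

(* countable family indexed by nat (finite families: pad with the zero map);
   the sum is trace preserving: sum_mu tr E_mu(X) = tr X for all X,
   convergence in C = R^2 stated componentwise *)
Definition Z2_invariant_measurement (R : realType)
    (E : nat -> 'M[R[i]]_2 -> 'M[R[i]]_2) : Prop :=
  (forall mu, Z2_invariant_operation (E mu)) /\
  (forall X : 'M[R[i]]_2,
     (\sum_(mu < n) complex.Re (\tr (E mu X))) @[n --> \oo] --> (complex.Re (\tr X) : R) /\
     (\sum_(mu < n) complex.Im (\tr (E mu X))) @[n --> \oo] --> (complex.Im (\tr X) : R)).

(* Write psi = (a, b) and phi_mu = (c_mu, d_mu).  Every operation of the form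
   X |-> K X K^* + L X L^* with K diagonal and L antidiagonal is Z2-invariant, and
   it maps |psi><psi| to (al^2 + be^2) |phi><phi| as soon as K psi = al phi and
   L psi = be phi.  Solving for K and L gives trace weights
   |k0|^2 + |l1|^2 = (al^2 |c|^2 + be^2 |d|^2) / |a|^2, and the family is trace
   preserving iff these sum to one, i.e. sum_mu (al^2 |c|^2 + be^2 |d|^2) = |a|^2
   (and symmetrically for b).  Splitting w_mu = al_mu^2 + be_mu^2 with a common
   bias s towards the smaller of |c_mu|^2, |d_mu|^2 turns this into
   |a|^2 = (1 - s)(1 - M) + s M with M = sum_mu w_mu min(|c_mu|^2, |d_mu|^2),
   which is solvable with 0 <= s <= 1 exactly because M <= min(|a|^2, |b|^2),
   the coherence hypothesis. *)

From HB Require Import structures.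
From mathcomp Require Import all_boot all_algebra.
From mathcomp Require Import complex.
From mathcomp Require Import all_classical all_reals all_analysis.
From mathcomp Require Import ring lra.
Set Implicit Arguments. Unset Strict Implicit. Unset Printing Implicit Defensive.
Import GRing.Theory Num.Theory.
Import mathcomp.order.order.Order.TTheory.
Import numFieldNormedType.Exports.
Local Open Scope classical_set_scope.
Local Open Scope ring_scope.
Local Open Scope complex_scope.

Lemma sum_ord2 (V : nmodType) (F : 'I_2 -> V) : \sum_(i < 2) F i = F 0 + F 1.
Proof. by rewrite big_ord_recl big_ord1; congr (F _ + F _); apply: val_inj. Qed.

Lemma ord2P (i : 'I_2) : i = 0 \/ i = 1.
Proof. by case: i => [[|[|//]]] Hi; [left|right]; apply: val_inj. Qed.

Lemma sum_pair_ord2 (V : nmodType) (I : finType) (F : I * 'I_2 -> V) :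
  \sum_(p : I * 'I_2) F p = \sum_(i : I) (F (i, 0) + F (i, 1)).
Proof.
transitivity (\sum_(i : I) \sum_(j < 2) F (i, j)).
  by rewrite pair_bigA; apply: eq_bigr; case.
by apply: eq_bigr => i _; rewrite sum_ord2.
Qed.

Lemma sum_pair_ord2_form (V : nmodType) (I : finType) (F : I * 'I_2 -> I * 'I_2 -> V) :
  \sum_p \sum_q F p q = \sum_i \sum_j
    (F (i, 0) (j, 0) + F (i, 0) (j, 1) + F (i, 1) (j, 0) + F (i, 1) (j, 1)).
Proof.
rewrite sum_pair_ord2; apply: eq_bigr => i _; rewrite !sum_pair_ord2 -big_split /=.
by apply: eq_bigr => j _; rewrite !addrA.
Qed.

Section SquaredNorm.
Variable R : realType.
Implicit Types (z : R[i]) (r : R).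

(* Stated with [conjc]: below a ring operator, [^*] parses as [Num.conj]. *)
Lemma conjcM z1 z2 : conjc (z1 * z2) = conjc z1 * conjc z2.
Proof. exact: rmorphM. Qed.

Lemma sqnormE z : z * conjc z = (sqnorm z)%:C.
Proof. by rewrite -sqr_normc -add_Re2_Im2. Qed.

Lemma sqnorm_ge0 z : 0 <= sqnorm z.
Proof. by rewrite /sqnorm addr_ge0 // sqr_ge0. Qed.

Lemma sqnorm_eq0 z : (sqnorm z == 0) = (z == 0).
Proof.
case: z => a b; rewrite /sqnorm paddr_eq0 ?sqr_ge0 // !sqrf_eq0.
by rewrite eq_complex.
Qed.

Lemma sqnormM z1 z2 : sqnorm (z1 * z2) = sqnorm z1 * sqnorm z2.
Proof. by case: z1 => a b; case: z2 => c d; rewrite /sqnorm /=; ring. Qed.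

Lemma sqnormR r : sqnorm r%:C = r ^+ 2.
Proof. by rewrite /sqnorm /= expr0n addr0. Qed.

Lemma sqnormV z : sqnorm z^-1 = (sqnorm z)^-1.
Proof.
have [->|z0] := eqVneq z 0; first by rewrite invr0 sqnormR expr0n invr0.
have n0 : sqnorm z != 0 by rewrite sqnorm_eq0.
by apply: (mulfI n0); rewrite -sqnormM mulfV // mulfV // sqnormR expr1n.
Qed.

Lemma ReMR z r : complex.Re (z * r%:C) = complex.Re z * r.
Proof. by case: z => a b /=; ring. Qed.

Lemma ImMR z r : complex.Im (z * r%:C) = complex.Im z * r.
Proof. by case: z => a b /=; ring. Qed.

End SquaredNorm.

Section Z2Kraus.
Variable R : realType.
Local Notation C := R[i].

(* The operation X |-> K X K^* + L X L^* with K = diag(k0, k1) and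
   L = [[0, l0], [l1, 0]]; K commutes and L anticommutes with piZ2. *)
Definition z2_kraus (k0 k1 l0 l1 : C) (X : 'M[C]_2) : 'M[C]_2 :=
  \matrix_(i, j) if i == 0 then
    (if j == 0 then k0 * X 0 0 * conjc k0 + l0 * X 1 1 * conjc l0
     else k0 * X 0 1 * conjc k1 + l0 * X 1 0 * conjc l1)
  else (if j == 0 then k1 * X 1 0 * conjc k0 + l1 * X 0 1 * conjc l0
     else k1 * X 1 1 * conjc k1 + l1 * X 0 0 * conjc l1).

Variables k0 k1 l0 l1 : C.
Local Notation E := (z2_kraus k0 k1 l0 l1).

Lemma z2_kraus_linear : is_linear_map E.
Proof.
move=> a X Y; apply/matrixP => i j; rewrite !mxE.
by case: (ord2P i) => ->; case: (ord2P j) => -> /=; rewrite ?mxE; ring.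
Qed.

Lemma z2_kraus_covariant X : E (piZ2 R *m X *m piZ2 R) = piZ2 R *m E X *m piZ2 R.
Proof.
apply/matrixP => i j; rewrite !mxE !sum_ord2 !mxE !sum_ord2 !mxE.
by case: (ord2P i) => ->; case: (ord2P j) => -> /=; rewrite ?mxE ?sum_ord2 ?mxE /=; ring.
Qed.

(* <v, (id (x) E)(X) v> = <K^* v, X K^* v> + <L^* v, X L^* v>. *)
Lemma z2_kraus_cp : completely_positive E.
Proof.
move=> I X X_psd v.
pose u1 (p : I * 'I_2) := if p.2 == 0 then conjc k0 * v (p.1, 0) else conjc k1 * v (p.1, 1).
pose u2 (p : I * 'I_2) := if p.2 == 0 then conjc l1 * v (p.1, 1) else conjc l0 * v (p.1, 0).
have := addr_ge0 (X_psd u1) (X_psd u2).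
rewrite !sum_pair_ord2_form -big_split; congr (0 <= _); apply: eq_bigr => i _.
rewrite -big_split; apply: eq_bigr => j _.
by rewrite /u1 /u2 /= !mxE /= !conjcM !conjcK; ring.
Qed.

Lemma z2_kraus_trace X :
  \tr (E X) = X 0 0 * (sqnorm k0 + sqnorm l1)%:C + X 1 1 * (sqnorm k1 + sqnorm l0)%:C.
Proof.
have cD (x y : R) : (x + y)%:C = x%:C + y%:C by apply/eqP; rewrite eq_complex /= addr0 !eqxx.
by rewrite /mxtrace sum_ord2 !mxE /= (cD (sqnorm k0)) (cD (sqnorm k1)) -!sqnormE; ring.
Qed.

Lemma psd_diag_ge0 (X : 'M[C]_2) i : psd X -> 0 <= X i i.
Proof.
move=> /(_ (fun j => (j == i)%:R)); rewrite !sum_ord2 !conjc_nat.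
by case: (ord2P i) => ->; rewrite !eqxx /= !(mulr0, mulr1, mul1r, mul0r, addr0, add0r).
Qed.

Lemma z2_kraus_operation :
  sqnorm k0 + sqnorm l1 <= 1 -> sqnorm k1 + sqnorm l0 <= 1 ->
  Z2_invariant_operation E.
Proof.
move=> D0_le1 D1_le1; split.
- exact: z2_kraus_linear.
- exact: z2_kraus_cp.
- move=> X X_psd; rewrite z2_kraus_trace /mxtrace sum_ord2 -subr_ge0.
  rewrite (_ : _ - _ = X 0 0 * (1 - (sqnorm k0 + sqnorm l1))%:C +
                       X 1 1 * (1 - (sqnorm k1 + sqnorm l0))%:C); last first.
    by rewrite !rmorphB /=; ring.
  by rewrite addr_ge0 // mulr_ge0 ?psd_diag_ge0 // ler0c subr_ge0.
- exact: z2_kraus_covariant.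
Qed.

Lemma ketbraE (v : 'cV[C]_2) i j : ketbra v i j = v i 0 * conjc (v j 0).
Proof. by rewrite /ketbra /adjmx !mxE big_ord1 !mxE. Qed.

Lemma z2_kraus_ketbra (psi phi : 'cV[C]_2) (al be : R) :
  k0 * psi 0 0 = al%:C * phi 0 0 -> k1 * psi 1 0 = al%:C * phi 1 0 ->
  l0 * psi 1 0 = be%:C * phi 0 0 -> l1 * psi 0 0 = be%:C * phi 1 0 ->
  E (ketbra psi) = (al ^+ 2 + be ^+ 2)%:C *: ketbra phi.
Proof.
move=> Kpsi0 Kpsi1 Lpsi0 Lpsi1.
pose Kpsi (i : 'I_2) := if i == 0 then k0 * psi 0 0 else k1 * psi 1 0.
pose Lpsi (i : 'I_2) := if i == 0 then l0 * psi 1 0 else l1 * psi 0 0.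
have EKL i j : E (ketbra psi) i j = Kpsi i * conjc (Kpsi j) + Lpsi i * conjc (Lpsi j).
  rewrite mxE !ketbraE /Kpsi /Lpsi.
  by case: (ord2P i) => ->; case: (ord2P j) => -> /=; rewrite ?ketbraE !conjcM; ring.
have Kpsi_phi i : Kpsi i = al%:C * phi i 0 by case: (ord2P i) => ->.
have Lpsi_phi i : Lpsi i = be%:C * phi i 0 by case: (ord2P i) => ->.
apply/matrixP => i j; rewrite EKL !Kpsi_phi !Lpsi_phi mxE ketbraE !conjcM !conjc_real.
by rewrite rmorphD /= !rmorphXn; ring.
Qed.

End Z2Kraus.

Section PartialSums.
Variable R : realType.
Implicit Types (f g h : nat -> R) (a b x y : R).

Lemma cvg_partial_sum_comb f g h a b x y : (forall k, h k = x * f k + y * g k) ->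
  (\sum_(k < n) f k) @[n --> \oo] --> a -> (\sum_(k < n) g k) @[n --> \oo] --> b ->
  (\sum_(k < n) h k) @[n --> \oo] --> x * a + y * b.
Proof.
move=> hE fa gb; rewrite (_ : (fun n => _) =
  (fun n => x * \sum_(k < n) f k + y * \sum_(k < n) g k)); last first.
  by apply/funext => n; rewrite !mulr_sumr -big_split; apply: eq_bigr => k _.
have xf := cvgMl_tmp (a := x) fa; have yg := cvgMl_tmp (a := y) gb.
exact: (cvgD (xf _) (yg _)).
Qed.

Lemma partial_sum_nondecreasing f : (forall k, 0 <= f k) ->
  nondecreasing_seq (fun n => \sum_(k < n) f k).
Proof.
move=> f_ge0 m n mn.
have := @nondecreasing_series R f xpredT 0 (fun k _ _ => f_ge0 k) m n mn.
by rewrite /= !big_mkord.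
Qed.

Lemma nneg_series_term_le f a : (forall k, 0 <= f k) ->
  (\sum_(k < n) f k) @[n --> \oo] --> a -> forall k, f k <= a.
Proof.
move=> f_ge0 fa k.
have f_cvg : cvgn (fun n => \sum_(k < n) f k) by apply/cvg_ex; exists a.
have := nondecreasing_cvgn_le (partial_sum_nondecreasing f_ge0) f_cvg k.+1.
rewrite (cvg_lim _ fa) // big_ord_recr /=; apply: le_trans.
by rewrite lerDr sumr_ge0.
Qed.

Lemma nneg_series_eq0 f : (forall k, 0 <= f k) ->
  (\sum_(k < n) f k) @[n --> \oo] --> (0 : R) -> forall k, f k = 0.
Proof.
move=> f_ge0 f0 k; apply/eqP; rewrite eq_le f_ge0 andbT.
exact: nneg_series_term_le f0 k.
Qed.

Lemma nneg_series_bounded_cvg f a : (forall k, 0 <= f k) ->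
  (forall n, \sum_(k < n) f k <= a) ->
  exists2 b, (\sum_(k < n) f k) @[n --> \oo] --> b & b <= a.
Proof.
move=> f_ge0 f_le.
have f_cvg : cvgn (fun n => \sum_(k < n) f k).
  apply: nondecreasing_is_cvgn; first exact: partial_sum_nondecreasing.
  by exists a => _ [n _ <-].
exists (limn (fun n => \sum_(k < n) f k)) => //.
by apply: limr_le => //; exact: nearW.
Qed.

End PartialSums.

Section Z2KrausMeasurement.
Variable R : realType.
Variables k0 k1 l0 l1 : nat -> R[i].
Hypothesis sum_k0_l1 :
  (\sum_(mu < n) (sqnorm (k0 mu) + sqnorm (l1 mu))) @[n --> \oo] --> (1 : R).
Hypothesis sum_k1_l0 :
  (\sum_(mu < n) (sqnorm (k1 mu) + sqnorm (l0 mu))) @[n --> \oo] --> (1 : R).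

Lemma z2_kraus_measurement :
  Z2_invariant_measurement (fun mu => z2_kraus (k0 mu) (k1 mu) (l0 mu) (l1 mu)).
Proof.
have D_ge0 (x y : R[i]) : 0 <= sqnorm x + sqnorm y by rewrite addr_ge0 ?sqnorm_ge0.
split=> [mu | X].
  apply: z2_kraus_operation.
  - exact: nneg_series_term_le (fun mu => D_ge0 (k0 mu) (l1 mu)) sum_k0_l1 mu.
  - exact: nneg_series_term_le (fun mu => D_ge0 (k1 mu) (l0 mu)) sum_k1_l0 mu.
pose E mu := z2_kraus (k0 mu) (k1 mu) (l0 mu) (l1 mu).
have tr_cvg (f : R[i] -> R) : {morph f : x y / x + y} ->
    (forall z r, f (z * r%:C) = f z * r) ->
    (\sum_(mu < n) f (\tr (E mu X))) @[n --> \oo] --> f (\tr X).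
  move=> fD fMR; rewrite [in f (\tr X)]/mxtrace sum_ord2 fD.
  rewrite -(mulr1 (f (X 0 0))) -(mulr1 (f (X 1 1))).
  apply: (@cvg_partial_sum_comb R _ _ (fun mu => f (\tr (E mu X))) _ _
    (f (X 0 0)) (f (X 1 1)) _ sum_k0_l1 sum_k1_l0) => mu.
  by rewrite z2_kraus_trace fD !fMR !(mulrC (f _)).
by split; apply: tr_cvg => [x y | z r]; rewrite ?ReMR ?ImMR //; case: x; case: y.
Qed.

End Z2KrausMeasurement.

Section WeightSplit.
Variable R : realType.

Lemma convex_comb_between (m x : R) : m <= x -> x <= 1 - m ->
  exists2 s, 0 <= s <= 1 & x = (1 - s) * (1 - m) + s * m.
Proof.
move=> m_le_x x_le.
have [m_half|m_half] := eqVneq (1 - 2 * m) 0.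
  by exists 0; rewrite ?lexx ?ler01 //; lra.
have d_gt0 : 0 < 1 - 2 * m by rewrite lt_def m_half /=; lra.
set s := (1 - m - x) / (1 - 2 * m).
have s_def : s * (1 - 2 * m) = 1 - m - x by rewrite divfK ?lt0r_neq0.
exists s; first by rewrite divr_ge0 ?ler_pdivrMr ?mul1r /=; lra.
have -> : (1 - s) * (1 - m) + s * m = 1 - m - s * (1 - 2 * m) by ring.
by rewrite s_def; ring.
Qed.

Lemma mix_min_weight (s u v : R) : u + v = 1 ->
  (if u <= v then s else 1 - s) * u + (1 - if u <= v then s else 1 - s) * v =
  (1 - s) * (1 - Num.min u v) + s * Num.min u v.
Proof.
move=> uv1; have -> : v = 1 - u by lra.
case: ifP => [u_le_v | /negbT]; first by rewrite (min_l u_le_v); ring.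
by rewrite -ltNge => v_lt_u; rewrite (min_r (ltW v_lt_u)); ring.
Qed.

(* al^2 = s w on the side of the smaller of u, v and (1 - s) w on the other,
   with s fitted to x by convex_comb_between. *)
Lemma weight_split (w u v : nat -> R) (x : R) :
  (forall mu, 0 <= w mu) -> (\sum_(mu < n) w mu) @[n --> \oo] --> (1 : R) ->
  (forall mu, 0 <= u mu) -> (forall mu, 0 <= v mu) -> (forall mu, u mu + v mu = 1) ->
  (forall n, \sum_(mu < n) w mu * Num.min (u mu) (v mu) <= Num.min x (1 - x)) ->
  exists al be : nat -> R, [/\ forall mu, al mu ^+ 2 + be mu ^+ 2 = w mu,
    (\sum_(mu < n) (al mu ^+ 2 * u mu + be mu ^+ 2 * v mu)) @[n --> \oo] --> x &
    (\sum_(mu < n) (al mu ^+ 2 * v mu + be mu ^+ 2 * u mu)) @[n --> \oo] --> 1 - x].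
Proof.
move=> w_ge0 w_sum u_ge0 v_ge0 uv1 wm_le.
pose m mu := Num.min (u mu) (v mu).
have wm_ge0 mu : 0 <= w mu * m mu by rewrite mulr_ge0 // le_min u_ge0 v_ge0.
pose wm mu := w mu * m mu.
have [mb wm_sum] := nneg_series_bounded_cvg (f := wm) wm_ge0 wm_le.
rewrite le_min => /andP[mb_le_x mb_le_1x].
have [s /andP[s_ge0 s_le1] x_def] : exists2 s, 0 <= s <= 1 & x = (1 - s) * (1 - mb) + s * mb.
  by apply: convex_comb_between => //; lra.
pose t mu := if u mu <= v mu then s else 1 - s.
have t_ge0 mu : 0 <= t mu by rewrite /t; case: ifP => _; lra.
have t_le1 mu : 0 <= 1 - t mu by rewrite /t; case: ifP => _; lra.
pose al mu := Num.sqrt (w mu * t mu); pose be mu := Num.sqrt (w mu * (1 - t mu)).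
have al2 mu : al mu ^+ 2 = w mu * t mu by rewrite sqr_sqrtr ?mulr_ge0.
have be2 mu : be mu ^+ 2 = w mu * (1 - t mu) by rewrite sqr_sqrtr ?mulr_ge0.
pose mix mu := w mu * t mu * u mu + w mu * (1 - t mu) * v mu.
have sum_x : (\sum_(mu < n) mix mu) @[n --> \oo] --> x.
  rewrite (_ : x = (1 - s) * 1 + (2 * s - 1) * mb); last by rewrite x_def; ring.
  apply: (cvg_partial_sum_comb _ w_sum wm_sum) => mu.
  by rewrite /mix /t -!mulrA -mulrDr (mix_min_weight s (uv1 mu)) /wm /m; ring.
exists al, be; split => [mu | | ].
- by rewrite al2 be2; ring.
- by under eq_cvg => n do under eq_bigr => mu _ do rewrite al2 be2.
- rewrite (_ : 1 - x = 1 * 1 + (-1) * x); last by ring.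
  apply: (cvg_partial_sum_comb (h := fun mu => al mu ^+ 2 * v mu + be mu ^+ 2 * u mu)
    _ w_sum sum_x) => mu.
  have u_def : u mu = 1 - v mu by have := uv1 mu; lra.
  by rewrite al2 be2 /mix u_def; ring.
Qed.

End WeightSplit.

Lemma kraus_coefficients_exist (R : realType) (x : R[i]) (w al be : nat -> R)
    (c d : nat -> R[i]) :
  (forall mu, 0 <= w mu) -> (\sum_(mu < n) w mu) @[n --> \oo] --> (1 : R) ->
  (\sum_(mu < n) (al mu ^+ 2 * sqnorm (c mu) + be mu ^+ 2 * sqnorm (d mu)))
    @[n --> \oo] --> sqnorm x ->
  exists k l : nat -> R[i],
    (forall mu, k mu * x = (al mu)%:C * c mu /\ l mu * x = (be mu)%:C * d mu) /\
    (\sum_(mu < n) (sqnorm (k mu) + sqnorm (l mu))) @[n --> \oo] --> (1 : R).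
Proof.
move=> w_ge0 w_sum cd_sum.
pose pq mu := sqnorm ((al mu)%:C * c mu) + sqnorm ((be mu)%:C * d mu).
have pq_ge0 mu : 0 <= pq mu by rewrite addr_ge0 ?sqnorm_ge0.
have pq_sum : (\sum_(mu < n) pq mu) @[n --> \oo] --> sqnorm x.
  by under eq_cvg => n do under eq_bigr => mu _ do rewrite /pq !sqnormM !sqnormR.
have sqnorm0 : sqnorm (0 : R[i]) = 0 by apply/eqP; rewrite sqnorm_eq0.
have [x0 | x_neq0] := eqVneq x 0.
  (* Then every al c and be d vanishes, and k = sqrt w, l = 0 restores the trace. *)
  rewrite x0 sqnorm0 in pq_sum; have pq0 := nneg_series_eq0 pq_ge0 pq_sum.
  exists (fun mu => (Num.sqrt (w mu))%:C), (fun=> 0); split.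
    move=> mu; have /eqP := pq0 mu; rewrite paddr_eq0 ?sqnorm_ge0 // !sqnorm_eq0.
    by rewrite x0 !mulr0 => /andP[/eqP -> /eqP ->].
  by under eq_cvg => n do under eq_bigr => mu _ do
    rewrite sqnormR (sqr_sqrtr (w_ge0 mu)) sqnorm0 addr0.
pose k mu := (al mu)%:C * c mu / x; pose l mu := (be mu)%:C * d mu / x.
exists k, l; split; first by move=> mu; rewrite !divfK.
have sx_neq0 : sqnorm x != 0 by rewrite sqnorm_eq0.
rewrite [X in _ --> X](_ : 1 = (sqnorm x)^-1 * sqnorm x + 0 * sqnorm x); last first.
  by rewrite mul0r addr0 mulVf.
apply: (cvg_partial_sum_comb (h := fun mu => sqnorm (k mu) + sqnorm (l mu)) _ pq_sum pq_sum).
by move=> mu; rewrite /k /l /pq !sqnormM sqnormV; ring.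
Qed.

Lemma coh_partial_sum_le (R : realType) (w : nat -> R) (phi : nat -> 'cV[R[i]]_2)
    (psi : 'cV[R[i]]_2) :
  (forall mu, 0 <= w mu) ->
  (\sum_(mu <oo) (w mu * coh (phi mu))%:E <= (coh psi)%:E)%E ->
  forall n, \sum_(mu < n) w mu * Num.min (sqnorm (phi mu 0 0)) (sqnorm (phi mu 1 0)) <=
    Num.min (sqnorm (psi 0 0)) (sqnorm (psi 1 0)).
Proof.
move=> w_ge0 coh_le n.
have coh_ge0 mu : (0 <= (w mu * coh (phi mu))%:E)%E.
  by rewrite lee_fin mulr_ge0 // mulr_ge0 // le_min !sqnorm_ge0.
have := le_trans (@nneseries_lim_ge R _ xpredT 0 n (fun mu _ _ => coh_ge0 mu)) coh_le.
rewrite sumEFin lee_fin big_mkord /coh.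
by under eq_bigr => mu _ do rewrite mulrCA; rewrite -mulr_sumr ler_pM2l.
Qed.

Theorem theorem13 (R : realType) (psi : 'cV[R[i]]_2)
    (w : nat -> R) (phi : nat -> 'cV[R[i]]_2) :
  pure_state psi ->
  (forall mu, pure_state (phi mu)) ->
  (forall mu, 0 <= w mu) ->
  (\sum_(mu < n) w mu) @[n --> \oo] --> (1 : R) ->
  (\sum_(mu <oo) (w mu * coh (phi mu))%:E <= (coh psi)%:E)%E ->
  exists E : nat -> 'M[R[i]]_2 -> 'M[R[i]]_2,
    Z2_invariant_measurement E /\
    forall mu, E mu (ketbra psi) = (Complex (w mu) 0) *: ketbra (phi mu).
Proof.
move=> psi_pure phi_pure w_ge0 w_sum coh_le.
have pure_sum (chi : 'cV[R[i]]_2) : pure_state chi -> sqnorm (chi 0 0) + sqnorm (chi 1 0) = 1.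
  by rewrite /pure_state sum_ord2.
have psi1 : sqnorm (psi 1 0) = 1 - sqnorm (psi 0 0).
  by have := pure_sum psi psi_pure; lra.
have := coh_partial_sum_le w_ge0 coh_le; rewrite psi1 => coh_bound.
have [al [be [w_albe sum0 sum1]]] := weight_split (u := fun mu => sqnorm (phi mu 0 0))
  (v := fun mu => sqnorm (phi mu 1 0)) w_ge0 w_sum (fun=> sqnorm_ge0 _)
  (fun=> sqnorm_ge0 _) (fun mu => pure_sum _ (phi_pure mu)) coh_bound.
rewrite -psi1 in sum1.
have [k0 [l1 [K0 sum01]]] := kraus_coefficients_exist (al := al) (be := be)
  (c := fun mu => phi mu 0 0) (d := fun mu => phi mu 1 0) w_ge0 w_sum sum0.
have [k1 [l0 [K1 sum10]]] := kraus_coefficients_exist (al := al) (be := be)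
  (c := fun mu => phi mu 1 0) (d := fun mu => phi mu 0 0) w_ge0 w_sum sum1.
exists (fun mu => z2_kraus (k0 mu) (k1 mu) (l0 mu) (l1 mu)); split.
  exact: z2_kraus_measurement.
move=> mu; have [K00 L10] := K0 mu; have [K11 L01] := K1 mu.
by rewrite -w_albe; apply: z2_kraus_ketbra.
Qed.
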